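(* Let $\Sigma_1\subset(N_1)_{\mathbf R}$ and $\Sigma_2\subset(N_2)_{\mathbf R}$ be amply equivalent complete fans. For every $\mathbf Q$-ample divisor $D$ on $X_{\Sigma_2}$, the assignment of strata $S^{\varphi^*(\chi_D)}_\lambda\mapsto S^{\chi_D}_{\varphi(\lambda)}$, defined for $\lambda\in\Gamma(G_1)_{\mathbf Q}$, is an equivalence between the stratification of $Z(\Sigma)$ induced by $\varphi^*(D)$ on $X_{\Sigma_1}$ and the stratification of $Z(\Sigma)$ induced by $D$ on $X_{\Sigma_2}$. The same holds for $\mathbf R$-ample divisors $D$ on $X_{\Sigma_2}$ and $\lambda\in\Gamma(G_1)_{\mathbf R}$ (using the $\mathbf R$-linear extensions of $\varphi,\varphi^*$).
   Context: For a complete fan $\Sigma$ in $N_{\mathbf R}$: rays $\Sigma(1)$, primitive generators $u_\rho$, divisors $D_\rho$; a primitive collection is $C\subset\Sigma(1)$ not contained in $\sigma(1)$ for any cone $\sigma$, every proper subset of which is. Two complete fans $\Sigma_1\subset(N_1)_{\mathbf R}$, $\Sigma_2\subset(N_2)_{\mathbf R}$ with $\mathrm{rank}N_1=\mathrm{rank}N_2$ are amply equivalent if there is a bijection $\Psi:\Sigma_1(1)\to\Sigma_2(1)$ such that $C$ is a primitive collection of $\Sigma_1$ iff $\Psi(C)$ is one of $\Sigma_2$, and for all integers $(a_\rho)$, $\sum a_\rho u_\rho=0\iff\sum a_\rho u_{\Psi(\rho)}=0$. Via $\Psi$ identify $\mathbf C^{\Sigma_1(1)}$ and $\mathbf C^{\Sigma_2(1)}$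 with a common $\mathbf C^{\Sigma(1)}=\mathrm{Spec}\,\mathbf C[x_\rho]$; then $Z(\Sigma_i)=\bigcup_C V(x_\rho:\rho\in C)$ (over primitive collections) coincide, denoted $Z(\Sigma)$. $G_i=\mathrm{Hom}(\mathrm{Cl}(X_{\Sigma_i}),\mathbf C^\times)\subset(\mathbf C^\times)^{\Sigma_i(1)}$ acts coordinatewise; $\Gamma(G_i)=\{b\in\mathbf Z^{\Sigma_i(1)}:\sum b_\rho u_\rho=0\}$, with $\langle\chi_D,b\rangle=\sum a_\rho b_\rho$ for $D=\sum a_\rho D_\rho$, and $\Gamma(G_i)_{\mathbf R}\subset\mathbf R^{\Sigma_i(1)}$ has the restricted standard inner product. $\varphi:\Gamma(G_1)_{\mathbf Q}\to\Gamma(G_2)_{\mathbf Q}$ is the isomorphism $(b_\rho)_{\rho\in\Sigma_1(1)}\mapsto(b_{\Psi^{-1}(\rho')})_{\rho'\in\Sigma_2(1)}$, and $\varphi^*:\mathrm{Cl}(X_{\Sigma_2})_{\mathbf Q}\to\mathrm{Cl}(X_{\Sigma_1})_{\mathbf Q}$ is its dual, sending the class of $\sum q_\rho D_{\Psi(\rho)}$ to that of $\sum q_\rho D_\rho$; it maps $\mathbf Q$-ample divisors onto $\mathbf Q$-ample divisors, and $\varphi^*(\chi_D)=\chi_{\varphi^*(D)}$. For a projective toric $X_\Sigma$ and $\mathbf R$-ample $D$ (element of the ample cone in $\mathrm{Pic}(X_\Sigma)_{\mathbf R}$): let $\chi_D^*\in\Gamma(G)_{\mathbf R}$ with $(\chi_D^*,v)=\langle\chi_D,v\rangle$;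 for $x\in Z(\Sigma)$, with $S_x=\{\rho:x_\rho\ne0\}$, $\sigma_x=\{v\in\Gamma(G)_{\mathbf R}:v_\rho\ge0\ \forall\rho\in S_x\}$, let $\lambda^D_x\in\sigma_x$ be the unique vector on the ray where $v\mapsto\langle\chi_D,v\rangle/\|v\|$ attains its minimum $M^D(x)$ on $\sigma_x\setminus\{0\}$, normalized by $\|\lambda^D_x\|=-M^D(x)$. The strata of $Z(\Sigma)$ induced by $D$ are $S^{\chi_D}_\lambda=\{x\in Z(\Sigma):\lambda^D_x=\lambda\}$ (nonempty ones), ordered by $S^{\chi_D}_\lambda>S^{\chi_D}_{\lambda'}$ iff $\|\lambda\|>\|\lambda'\|$. Two stratifications are equivalent if there is a bijection of index sets preserving each stratum as a set and preserving the strict order in both directions. *)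

From HB Require Import structures.
From mathcomp Require Import all_boot all_algebra.
From mathcomp Require Import reals complex.

Set Implicit Arguments.
Unset Strict Implicit.
Unset Printing Implicit Defensive.

Import GRing.Theory Num.Theory.
Local Open Scope ring_scope.

(* Lattice N = Z^n, N_R = R^n (row vectors).  A fan is encoded by its finite *)
(* set of rays I = Sigma(1), the primitive generators u : I -> Z^n, and the  *)
(* family C of the ray sets sigma(1) of its cones (sigma = Cone(u_r, r in    *)
(* sigma(1))).                                                               *)

Definition vecR (R : realType) (n : nat) (w : 'rV[int]_n) : 'rV[R]_n :=
  map_mx (fun z : int => z%:~R) w.
Arguments vecR R {n} w.

Definition dotv (K : numDomainType) (n : nat) (m v : 'rV[K]_n) : K :=
  \sum_(i < n) m 0 i * v 0 i.

Definition cone (R : realType) (n : nat) (I : finType) (u : I -> 'rV[int]_n)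
  (s : {set I}) : 'rV[R]_n -> Prop :=
  fun v => exists c : I -> R, (forall r, 0 <= c r) /\
     (forall r, r \notin s -> c r = 0) /\ v = \sum_r c r *: vecR R (u r).
Arguments cone R {n I} u s.

Definition dual_cone (R : realType) (n : nat) (K : 'rV[R]_n -> Prop)
  (m : 'rV[R]_n) : Prop := forall v, K v -> 0 <= dotv m v.

Definition is_face (R : realType) (n : nat) (F K : 'rV[R]_n -> Prop) : Prop :=
  exists m, dual_cone K m /\ forall v, F v <-> (K v /\ dotv m v = 0).

Definition strongly_convex (R : realType) (n : nat) (K : 'rV[R]_n -> Prop) :=
  forall v, K v -> K (- v) -> v = 0.

Definition primitive_vec (n : nat) (w : 'rV[int]_n) : Prop :=
  w <> 0 /\ forall (k : int) (w' : 'rV[int]_n), w = k *: w' -> `|k| = 1.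

(* (I, u, C) describes a complete fan in R^n (Cox-Little-Schenck Def. 3.1.2,  *)
(* 3.1.18): every cone is strongly convex with ray set exactly sigma(1) = s,  *)
(* faces of cones are cones, two cones meet in a common face, every r in I  *)
(* is a ray of the fan with primitive generator u r, and the support is R^n. *)
Definition complete_fan (R : realType) (n : nat) (I : finType)
  (u : I -> 'rV[int]_n) (C : {set {set I}}) : Prop :=
  (forall r, primitive_vec (u r)) /\
  injective u /\
  (forall r, [set r] \in C) /\
  (forall s, s \in C -> strongly_convex (cone R u s) /\
     (forall r, is_face (cone R u [set r]) (cone R u s) <-> r \in s)) /\
  (forall s, s \in C -> forall F, is_face F (cone R u s) ->
     exists2 t, t \in C & forall v, F v <-> cone R u t v) /\
  (forall s t, s \in C -> t \in C ->
     is_face (fun v => cone R u s v /\ cone R u t v) (cone R u s) /\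
     is_face (fun v => cone R u s v /\ cone R u t v) (cone R u t)) /\
  (forall v : 'rV[R]_n, exists2 s, s \in C & cone R u s v).

Definition in_some_cone (I : finType) (C : {set {set I}}) (P : {set I}) : bool :=
  [exists s in C, P \subset s].

Definition primitive_collection (I : finType) (C : {set {set I}}) (P : {set I}) :=
  ~~ in_some_cone C P /\ forall Q : {set I}, Q \proper P -> in_some_cone C Q.

Definition amply_equivalent (R : realType) (n : nat) (I1 I2 : finType)
  (u1 : I1 -> 'rV[int]_n) (C1 : {set {set I1}})
  (u2 : I2 -> 'rV[int]_n) (C2 : {set {set I2}})
  (Psi : I1 -> I2) (Psi' : I2 -> I1) : Prop :=
  complete_fan R u1 C1 /\ complete_fan R u2 C2 /\
  cancel Psi Psi' /\ cancel Psi' Psi /\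
  (forall P : {set I1},
     primitive_collection C1 P <-> primitive_collection C2 (Psi @: P)) /\
  (forall b : I1 -> int,
     \sum_r b r *: u1 r = 0 <-> \sum_r b r *: u2 (Psi r) = 0).

(* Z(Sigma) inside C^{Sigma(1)}.                                              *)
Definition Zset (R : realType) (I : finType) (C : {set {set I}})
  (x : I -> R[i]) : Prop :=
  exists P, primitive_collection C P /\ forall r, r \in P -> x r = 0.

(* Gamma(G) = integer relations among the u_r, and its real / rational spans *)
(* Gamma(G)_R, Gamma(G)_Q inside R^{Sigma(1)}.                               *)
Definition int_relation (n : nat) (I : finType) (u : I -> 'rV[int]_n)
  (b : I -> int) : Prop := \sum_r b r *: u r = 0.

Definition GammaR (R : realType) (n : nat) (I : finType) (u : I -> 'rV[int]_n)
  (v : I -> R) : Prop :=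
  exists (m : nat) (c : 'I_m -> R) (b : 'I_m -> I -> int),
    (forall k, int_relation u (b k)) /\
    forall r, v r = \sum_(k < m) c k * (b k r)%:~R.

Definition GammaQ (R : realType) (n : nat) (I : finType) (u : I -> 'rV[int]_n)
  (v : I -> R) : Prop :=
  exists (m : nat) (c : 'I_m -> rat) (b : 'I_m -> I -> int),
    (forall k, int_relation u (b k)) /\
    forall r, v r = ratr (\sum_(k < m) c k * (b k r)%:~R).

Definition normv (R : realType) (I : finType) (v : I -> R) : R :=
  Num.sqrt (\sum_r v r ^+ 2).

(* <chi_D, v> for D = sum_r a_r D_r, extended R-linearly. *)
Definition pairing (R : realType) (I : finType) (a : I -> R) (v : I -> R) : R :=
  \sum_r a r * v r.

Definition sigma_x (R : realType) (n : nat) (I : finType) (u : I -> 'rV[int]_n)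
  (x : I -> R[i]) (v : I -> R) : Prop :=
  GammaR u v /\ forall r, x r != 0 -> 0 <= v r.

(* lam = lambda^D_x: w spans the ray of sigma_x \ {0} on which              *)
(* v |-> <chi_D,v>/|v| attains its minimum M^D(x) = <chi_D,w>/|w|, and lam  *)
(* is the vector on that ray with |lam| = - M^D(x).                          *)
Definition kempf (R : realType) (n : nat) (I : finType) (u : I -> 'rV[int]_n)
  (a : I -> R) (x : I -> R[i]) (lam : I -> R) : Prop :=
  exists w : I -> R,
    [/\ sigma_x u x w, ~ (forall r, w r = 0),
        (forall v, sigma_x u x v -> ~ (forall r, v r = 0) ->
           pairing a w / normv w <= pairing a v / normv v)
      & exists2 c : R, 0 <= c &
          (forall r, lam r = c * w r) /\
          normv lam = - (pairing a w / normv w)].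

Definition stratum (R : realType) (n : nat) (I : finType) (u : I -> 'rV[int]_n)
  (C : {set {set I}}) (a : I -> R) (lam : I -> R) (x : I -> R[i]) : Prop :=
  Zset C x /\ kempf u a x lam.

(* Ampleness (Cox-Little-Schenck Thm 6.1.14: strictly convex support        *)
(* function).  D = sum_r a_r D_r is R-ample (its class lies in the ample     *)
(* cone of Pic(X)_R) iff for every maximal cone sigma there is m_sigma with  *)
(* <m_sigma,u_r> = -a_r for r in sigma(1) and > -a_r otherwise; Q-ample with *)
(* rational data.                                                            *)
Definition maximal_cone (I : finType) (C : {set {set I}}) (s : {set I}) : Prop :=
  s \in C /\ forall t, t \in C -> s \subset t -> t = s.

Definition R_ample (R : realType) (n : nat) (I : finType) (u : I -> 'rV[int]_n)
  (C : {set {set I}}) (a : I -> R) : Prop :=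
  forall s, maximal_cone C s -> exists m : 'rV[R]_n, forall r,
    (r \in s -> dotv m (vecR R (u r)) = - a r) /\
    (r \notin s -> - a r < dotv m (vecR R (u r))).
Arguments R_ample R {n I} u C a.

Definition Q_ample (n : nat) (I : finType) (u : I -> 'rV[int]_n)
  (C : {set {set I}}) (a : I -> rat) : Prop :=
  forall s, maximal_cone C s -> exists m : 'rV[rat]_n, forall r,
    (r \in s -> dotv m (map_mx (fun z : int => z%:~R) (u r)) = - a r) /\
    (r \notin s -> - a r < dotv m (map_mx (fun z : int => z%:~R) (u r))).

Definition phi (R : realType) (I1 I2 : finType) (Psi' : I2 -> I1)
  (lam : I1 -> R) : I2 -> R := fun r' => lam (Psi' r').

(* Equivalence of stratifications via the index map f: f is a bijection from *)
(* the indices of nonempty strata of the first onto those of the second,    *)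
(* preserving each stratum as a set and the strict order (by norm of index)  *)
(* in both directions.                                                       *)
Definition strat_equiv (R : realType) (A1 A2 X : Type)
  (J1 : A1 -> Prop) (J2 : A2 -> Prop)
  (S1 : A1 -> X -> Prop) (S2 : A2 -> X -> Prop)
  (n1 : A1 -> R) (n2 : A2 -> R) (f : A1 -> A2) : Prop :=
  let idx1 := fun l => J1 l /\ exists x, S1 l x in
  let idx2 := fun m => J2 m /\ exists x, S2 m x in
  [/\ forall l, idx1 l -> idx2 (f l),
      forall l l', idx1 l -> idx1 l' -> f l = f l' -> l = l',
      forall m, idx2 m -> exists2 l, idx1 l & f l = m,
      forall l, idx1 l -> forall x, S1 l x <-> S2 (f l) x
    & forall l l', idx1 l -> idx1 l' ->
        (n1 l' < n1 l <-> n2 (f l') < n2 (f l))].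

From HB Require Import structures.
From mathcomp Require Import all_boot all_algebra.
From mathcomp Require Import reals complex.
From Stdlib Require Import FunctionalExtensionality.
Import GRing.Theory Num.Theory.
Local Open Scope ring_scope.
Set Implicit Arguments.
Unset Strict Implicit.
Unset Printing Implicit Defensive.

(* Every ingredient of the stratification (Z(Sigma), Gamma(G), sigma_x, the
   pairing <chi_D, .> and the norm) is defined coordinatewise on R^{Sigma(1)}.
   Relabelling the coordinates along Psi is an isometry of R^{Sigma(1)} which,
   by ample equivalence, maps primitive collections to primitive collections
   and integral relations to integral relations, and it turns the pairing with
   phi^*(D) into the pairing with D.  Hence it maps sigma_x onto sigma_{Psi x}
   and the Kempf vector lambda^{phi^* D}_x to lambda^D_{Psi x}, so each stratum
   S^{phi^* chi_D}_lambda is the stratum S^{chi_D}_{phi lambda}, with the same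
   norm of its index. *)

Lemma comp_can (A B T : Type) (f : A -> B) (g : B -> A) (v : B -> T) :
  cancel g f -> (v \o f) \o g = v.
Proof. by move=> gK; apply: functional_extensionality => y /=; rewrite gK. Qed.

Lemma strat_equiv_bij (R : realType) (A1 A2 X : Type)
  (J1 : A1 -> Prop) (J2 : A2 -> Prop)
  (S1 : A1 -> X -> Prop) (S2 : A2 -> X -> Prop)
  (n1 : A1 -> R) (n2 : A2 -> R) (f : A1 -> A2) (g : A2 -> A1) :
  cancel f g -> cancel g f ->
  (forall l, J1 l <-> J2 (f l)) ->
  (forall l x, S1 l x <-> S2 (f l) x) ->
  (forall l, n2 (f l) = n1 l) ->
  strat_equiv J1 J2 S1 S2 n1 n2 f.
Proof.
move=> fK gK J12 S12 n12; split.
- by move=> l [/J12 J2l [x /S12 S2x]]; split; last exists x.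
- by move=> l l' _ _ /(can_inj fK).
- move=> m [J2m [x S2x]]; exists (g m) => //.
  by split; [apply/J12 | exists x; apply/S12]; rewrite gK.
- by move=> l _ x; apply: S12.
- by move=> l l' _ _; rewrite !n12.
Qed.

Section Relabel.
Variables (R : realType) (n : nat) (I1 I2 : finType).
Variables (Psi : I1 -> I2) (Psi' : I2 -> I1).
Hypotheses (PsiK : cancel Psi Psi') (Psi'K : cancel Psi' Psi).

Lemma reindex_relabel (V : nmodType) (F : I2 -> V) :
  \sum_r' F r' = \sum_r F (Psi r).
Proof. exact: (reindex Psi (onW_bij _ (Bijective PsiK Psi'K))). Qed.

Lemma normv_relabel (v : I1 -> R) : normv (v \o Psi') = normv v.
Proof.
rewrite /normv reindex_relabel.
by under eq_bigr do rewrite /= PsiK.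
Qed.

Lemma pairing_relabel (a : I2 -> R) (v : I1 -> R) :
  pairing a (v \o Psi') = pairing (a \o Psi) v.
Proof.
rewrite /pairing reindex_relabel.
by under eq_bigr do rewrite /= PsiK.
Qed.

Lemma int_relation_relabel (u1 : I1 -> 'rV[int]_n) (u2 : I2 -> 'rV[int]_n) :
  (forall b : I1 -> int,
     \sum_r b r *: u1 r = 0 <-> \sum_r b r *: u2 (Psi r) = 0) ->
  forall b, int_relation u1 b <-> int_relation u2 (b \o Psi').
Proof.
move=> rel b; rewrite /int_relation rel reindex_relabel.
by under [X in _ <-> X = _]eq_bigr do rewrite /= PsiK.
Qed.

Lemma Zset_relabel (C1 : {set {set I1}}) (C2 : {set {set I2}}) :
  (forall P,
     primitive_collection C1 P <-> primitive_collection C2 (Psi @: P)) ->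
  forall x : I1 -> R[i], Zset C1 x <-> Zset C2 (x \o Psi').
Proof.
move=> prim x; split=> [[P [/prim primP xP]] | [P' [primP' xP']]].
- exists (Psi @: P); split=> // r' /imsetP[r rP ->] /=.
  by rewrite PsiK; apply: xP.
- exists (Psi' @: P'); split=> [|r /imsetP[r' r'P' ->]]; last exact: xP'.
  by apply/prim; rewrite -imset_comp (eq_imset _ Psi'K) imset_id.
Qed.

Variables (u1 : I1 -> 'rV[int]_n) (u2 : I2 -> 'rV[int]_n).
Hypothesis relation_relabel :
  forall b, int_relation u1 b <-> int_relation u2 (b \o Psi').

Lemma span_relations_relabel (K : Type)
  (E : forall m, ('I_m -> K) -> ('I_m -> int) -> R) (v : I1 -> R) :
  (exists m c (b : 'I_m -> I1 -> int),
     (forall k, int_relation u1 (b k)) /\ forall r, v r = E m c (b^~ r)) <->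
  (exists m c (b : 'I_m -> I2 -> int),
     (forall k, int_relation u2 (b k)) /\
     forall r', v (Psi' r') = E m c (b^~ r')).
Proof.
split=> [[m [c [b [rel_b Ev]]]] | [m [c [b [rel_b Ev]]]]].
- exists m, c, (fun k => b k \o Psi'); split=> [k|r']; last exact: Ev.
  exact/relation_relabel.
- exists m, c, (fun k => b k \o Psi); split=> [k|r].
  + by apply/relation_relabel; rewrite comp_can.
  + by have := Ev (Psi r); rewrite PsiK.
Qed.

Lemma GammaR_relabel (v : I1 -> R) : GammaR u1 v <-> GammaR u2 (v \o Psi').
Proof.
exact: (span_relations_relabel (fun m (c : 'I_m -> R) bk =>
  \sum_(k < m) c k * (bk k)%:~R)).
Qed.

Lemma GammaQ_relabel (v : I1 -> R) : GammaQ u1 v <-> GammaQ u2 (v \o Psi').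
Proof.
exact: (span_relations_relabel (fun m (c : 'I_m -> rat) bk =>
  ratr (\sum_(k < m) c k * (bk k)%:~R))).
Qed.

Lemma sigma_x_relabel (x : I1 -> R[i]) (v : I1 -> R) :
  sigma_x u1 x v <-> sigma_x u2 (x \o Psi') (v \o Psi').
Proof.
split=> [[/GammaR_relabel Gv v_ge0] | [/GammaR_relabel Gv v_ge0]].
- by split=> // r'; apply: v_ge0.
- by split=> // r; have := v_ge0 (Psi r); rewrite /= PsiK.
Qed.

Lemma kempf_relabel_fwd (a : I2 -> R) (x : I1 -> R[i]) (lam : I1 -> R) :
  kempf u1 (a \o Psi) x lam -> kempf u2 a (x \o Psi') (lam \o Psi').
Proof.
move=> [w [sw w_neq0 w_min [c c_ge0 [lam_w lam_norm]]]].
exists (w \o Psi'); split.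
- exact/sigma_x_relabel.
- by move=> w0; apply: w_neq0 => r; rewrite -[r]PsiK; apply: w0.
- move=> v; rewrite -(comp_can v Psi'K) => /sigma_x_relabel sv v_neq0.
  rewrite !pairing_relabel !normv_relabel; apply: w_min => // v0.
  by apply: v_neq0 => r'; apply: v0.
- exists c => //; split; first by move=> r' /=; rewrite lam_w.
  by rewrite pairing_relabel !normv_relabel.
Qed.

End Relabel.

Lemma kempf_relabel (R : realType) (n : nat) (I1 I2 : finType)
  (Psi : I1 -> I2) (Psi' : I2 -> I1)
  (PsiK : cancel Psi Psi') (Psi'K : cancel Psi' Psi)
  (u1 : I1 -> 'rV[int]_n) (u2 : I2 -> 'rV[int]_n) :
  (forall b, int_relation u1 b <-> int_relation u2 (b \o Psi')) ->
  forall (a : I2 -> R) (x : I1 -> R[i]) (lam : I1 -> R),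
  kempf u1 (a \o Psi) x lam <-> kempf u2 a (x \o Psi') (lam \o Psi').
Proof.
move=> rel a x lam; split; first exact: kempf_relabel_fwd.
have rel' b : int_relation u2 b <-> int_relation u1 (b \o Psi).
  by rewrite rel comp_can.
have := kempf_relabel_fwd Psi'K PsiK rel'
  (a := a \o Psi) (x := x \o Psi') (lam := lam \o Psi').
by rewrite !comp_can.
Qed.

Lemma stratum_relabel (R : realType) (n : nat) (I1 I2 : finType)
  (u1 : I1 -> 'rV[int]_n) (C1 : {set {set I1}})
  (u2 : I2 -> 'rV[int]_n) (C2 : {set {set I2}})
  (Psi : I1 -> I2) (Psi' : I2 -> I1) :
  amply_equivalent R u1 C1 u2 C2 Psi Psi' ->
  forall (a : I2 -> R) (lam : I1 -> R) (x : I1 -> R[i]),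
  stratum u1 C1 (a \o Psi) lam x <->
  stratum u2 C2 a (lam \o Psi') (x \o Psi').
Proof.
move=> [_ [_ [PsiK [Psi'K [prim rel]]]]] a lam x.
rewrite /stratum (Zset_relabel PsiK Psi'K prim).
by rewrite (kempf_relabel PsiK Psi'K (int_relation_relabel PsiK Psi'K rel)).
Qed.

Theorem theoremC (R : realType) (n : nat) (I1 I2 : finType)
  (u1 : I1 -> 'rV[int]_n) (C1 : {set {set I1}})
  (u2 : I2 -> 'rV[int]_n) (C2 : {set {set I2}})
  (Psi : I1 -> I2) (Psi' : I2 -> I1) :
  amply_equivalent R u1 C1 u2 C2 Psi Psi' ->
  (forall a : I2 -> rat, Q_ample u2 C2 a ->
     strat_equiv (GammaQ u1) (GammaQ u2)
       (stratum u1 C1 (fun r => ratr (a (Psi r))))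
       (fun mu (x : I1 -> R[i]) => stratum u2 C2 (fun r' => ratr (a r')) mu
                                      (fun r' => x (Psi' r')))
       (@normv R I1) (@normv R I2) (phi Psi'))
  /\
  (forall a : I2 -> R, R_ample R u2 C2 a ->
     strat_equiv (GammaR u1) (GammaR u2)
       (stratum u1 C1 (fun r => a (Psi r)))
       (fun mu (x : I1 -> R[i]) => stratum u2 C2 a mu (fun r' => x (Psi' r')))
       (@normv R I1) (@normv R I2) (phi Psi')).
Proof.
move=> ample_eq; have [_ [_ [PsiK [Psi'K [_ rel]]]]] := ample_eq.
have rel_relabel := int_relation_relabel PsiK Psi'K rel.
have phiK : cancel (@phi R _ _ Psi') (phi Psi) by move=> v; apply: comp_can.
have phiK' : cancel (@phi R _ _ Psi) (phi Psi') by move=> v; apply: comp_can.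
split=> a _; apply: (strat_equiv_bij phiK phiK').
- exact: GammaQ_relabel.
- exact: stratum_relabel.
- exact: normv_relabel.
- exact: GammaR_relabel.
- exact: stratum_relabel.
- exact: normv_relabel.
Qed.
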